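(* Let $X$ be a space and let $n \ge 0$. Then for every $\gamma \in \pi_0(L^n X)$ there is a unique pair consisting of \begin{itemize} \item an order-preserving injection $\iota\colon [k] \hookrightarrow [n]$, and \item a new element $\gamma' \in \pi_0(L^k X)$, \end{itemize} such that $\gamma$ is the image of $\gamma'$ under the map $\pi_0(L^kX)\to\pi_0(L^nX)$ induced by the standard projection associated with $\iota$.
   Context: For $n\ge 0$ write $[n]=\{1,\dots,n\}$, $\mathbb{T}^n=(S^1)^n$, and $L^nX = \mathrm{Map}(\mathbb{T}^n, X)$; thus $L^1 X= LX$ is the free loop space and $L^0X=X$. An order-preserving injection $\iota\colon [k] \hookrightarrow [n]$ induces the standard projection $\mathbb{T}^n \to \mathbb{T}^k$, which is the projection onto the coordinates in the image of $\iota$. By precomposition, this projection induces a map $L^kX \to L^nX$. An element of $\pi_0(L^nX)$ is called old if it lies in the image of $\pi_0(L^kX)\to\pi_0(L^nX)$ for some standard projection with $k<n$. Otherwise it is called new. *)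

From HB Require Import structures.
From mathcomp Require Import all_boot all_order all_algebra.
From mathcomp Require Import all_classical all_reals all_analysis.
From Stdlib Require Rdefinitions.
From mathcomp Require Import Rstruct Rstruct_topology.
Set Implicit Arguments. Unset Strict Implicit. Unset Printing Implicit Defensive.
Import Order.TTheory GRing.Theory Num.Theory.
Local Open Scope classical_set_scope.
Local Open Scope ring_scope.

Definition circle_set : set (Rdefinitions.R * Rdefinitions.R) :=
  [set z | z.1 ^+ 2 + z.2 ^+ 2 = 1].
Definition S1 : topologicalType := set_type circle_set.

Definition torus (n : nat) : topologicalType := {ptws 'I_n -> S1}.

Definition mapsp (n : nat) (X : topologicalType) : topologicalType :=
  {compact-open, torus n -> X}.
Definition LnX (n : nat) (X : topologicalType) : set (mapsp n X) :=
  [set f | continuous (f : torus n -> X)].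

Definition same_pi0 (n : nat) (X : topologicalType) (f g : mapsp n X) : Prop :=
  exists p : Rdefinitions.R -> mapsp n X,
    [/\ {within `[0%R, 1%R], continuous p},
        (forall t, t \in `[0%R, 1%R] -> @LnX n X (p t)),
        p 0%R = f & p 1%R = g].

Definition order_inj (k n : nat) (iota : 'I_k -> 'I_n) : Prop :=
  forall i j : 'I_k, (i < j)%N -> (iota i < iota j)%N.

Definition std_proj (k n : nat) (iota : 'I_k -> 'I_n) : torus n -> torus k :=
  fun t => fun j : 'I_k => t (iota j).

Definition induced_map (X : topologicalType) (k n : nat) (iota : 'I_k -> 'I_n)
  (g : mapsp k X) : mapsp n X :=
  fun t : torus n => (g : torus k -> X) (std_proj iota t).

Definition old_class (X : topologicalType) (k : nat) (g : mapsp k X) : Prop :=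
  exists (m : nat) (iota : 'I_m -> 'I_k) (h : mapsp m X),
    [/\ (m < k)%N, order_inj iota, @LnX m X h & same_pi0 (induced_map iota h) g].
Definition new_class (X : topologicalType) (k : nat) (g : mapsp k X) : Prop :=
  ~ old_class g.

(* Reindexing along an equality k = k' (identity once the equation is
   destructed). *)
Definition cast_map (X : topologicalType) (k k' : nat) (e : k = k')
  (g : mapsp k' X) : mapsp k X :=
  fun t : torus k => (g : torus k' -> X) (fun j : 'I_k' => t (cast_ord (esym e) j)).

(* The map pi_0(L^k X) -> pi_0(L^n X) induced by an order-preserving injection
   iota is injective, because the projection T^n -> T^k has a continuous
   section (fill the coordinates outside the image of iota with a base point).
   Existence follows by strong induction on n, since an old class comes from a
   smaller torus.  For uniqueness, suppose iota^* g ~ iota'^* g' with g new.  If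
   some iota(i0) is not in the image of iota', pulling back along the section
   shows that g is homotopic to a map that ignores the coordinate i0, so g would
   be old.  Hence iota and iota' have the same image, so they coincide, and then
   g ~ g' by injectivity. *)

From HB Require Import structures.
From mathcomp Require Import all_boot all_order all_algebra.
From mathcomp Require Import all_classical all_reals all_analysis.
From mathcomp Require Import Rstruct Rstruct_topology lra.
Set Implicit Arguments. Unset Strict Implicit. Unset Printing Implicit Defensive.
Import Order.TTheory GRing.Theory Num.Theory.
Import numFieldNormedType.Exports.
Local Open Scope classical_set_scope.
Local Open Scope ring_scope.

Lemma within_continuous_comp_within (T U V : topologicalType) (A : set T)
    (B : set U) (h : T -> U) (p : U -> V) :
  continuous h -> (forall x, A x -> B (h x)) -> {within B, continuous p} ->
  {within A, continuous (p \o h)}.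
Proof.
move=> ch hAB /continuousP cp; apply/continuousP => O oO.
have [W oW WB] := (open_subspaceP _ _).1 (cp O oO).
apply/open_subspaceP; exists (h @^-1` W); first by move/continuousP: ch; apply.
rewrite eqEsubset; split => x [Ox Ax]; split => //.
  have : (W `&` B) (h x) by split => //; exact: hAB.
  by rewrite WB => -[].
have : ((p @^-1` O) `&` B) (h x) by split => //; exact: hAB.
by rewrite -WB => -[].
Qed.

Lemma affine_continuous (R : realType) (a b : R) :
  continuous (fun t : R => a * t + b).
Proof. by move=> x; apply: cvgD; [exact: mulrl_continuous | exact: cvg_cst]. Qed.

Section PathsInSubset.
Variables (R : realType) (Y : topologicalType).
Implicit Types (A : set Y) (y z : Y).

Definition path_in A y z : Prop :=
  exists p : R -> Y,
    [/\ {within `[0, 1], continuous p}, (forall t, t \in `[0, 1] -> A (p t)),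
        p 0 = y & p 1 = z].

Lemma path_in_refl A y : A y -> path_in A y y.
Proof. by move=> Ay; exists (fun=> y); split => //; exact: cst_continuous. Qed.

Lemma path_in_sym A y z : path_in A y z -> path_in A z y.
Proof.
have rev01 (t : R) : t \in `[0, 1] -> -1 * t + 1 \in `[0, 1].
  by rewrite !in_itv /= => /andP[? ?]; apply/andP; split; lra.
move=> [p [cp Ap p0 p1]]; exists (p \o (fun t => -1 * t + 1)); split.
- apply: within_continuous_comp_within cp; first exact: affine_continuous.
  move=> t; exact: rev01.
- by move=> t /rev01 /Ap.
- by rewrite /= mulr0 add0r.
- by rewrite /= mulr1 addNr.
Qed.

Lemma path_in_trans A x y z : path_in A x y -> path_in A y z -> path_in A x z.
Proof.
move=> [p [cp Ap p0 p1]] [q [cq Aq q0 q1]].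
pose r t := if t <= 2^-1 then p (2 * t + 0) else q (2 * t + -1).
have dbl01 (t : R) : 0 <= t <= 2^-1 -> 2 * t + 0 \in `[0, 1].
  by move=> /andP[? ?]; rewrite in_itv /=; apply/andP; split; lra.
have dbl01' (t : R) : 2^-1 <= t <= 1 -> 2 * t + -1 \in `[0, 1].
  by move=> /andP[? ?]; rewrite in_itv /=; apply/andP; split; lra.
exists r; split.
- apply: (@continuous_subspaceW R Y `[0, 1]%classic
    (`[0, 2^-1]%classic `|` `[2^-1, 1]%classic)).
    move=> t /=; rewrite !in_itv /= => /andP[t0 t1].
    have [|lt_t] := leP t (2^-1 : R); first by left; rewrite t0.
    by right; rewrite (ltW lt_t) t1.
  apply: withinU_continuous; [exact: itv_closed | exact: itv_closed | |].
  + apply: (@subspace_eq_continuous _ _ _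
      (from_subspace _ (p \o (fun t => 2 * t + 0)))).
      move=> t; rewrite inE /= in_itv /= => /andP[_ t_le].
      by rewrite /from_subspace /r /= ifT.
    apply: within_continuous_comp_within cp; first exact: affine_continuous.
    by move=> t; rewrite /= in_itv /=; exact: dbl01.
  + apply: (@subspace_eq_continuous _ _ _
      (from_subspace _ (q \o (fun t => 2 * t + -1)))).
      move=> t; rewrite inE /= in_itv /= => /andP[? _].
      rewrite /from_subspace /r /=; case: ifP => // ?.
      have -> : 2 * t + 0 = 1 by lra.
      have -> : 2 * t + -1 = 0 by lra.
      by rewrite p1 q0.
    apply: within_continuous_comp_within cq; first exact: affine_continuous.
    by move=> t; rewrite /= in_itv /=; exact: dbl01'.
- move=> t; rewrite in_itv /= => /andP[? ?]; rewrite /r.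
  case: ifP => ?; [apply: Ap; apply: dbl01 | apply: Aq; apply: dbl01'];
    apply/andP; split; lra.
- by rewrite /r ifT ?mulr0 ?addr0 //; lra.
- by rewrite /r ifF ?mulr1 ?addrK //; apply/negbTE; rewrite -ltNge; lra.
Qed.

End PathsInSubset.

Lemma path_in_comp (R : realType) (Y Z : topologicalType) (A : set Y) (B : set Z)
    (phi : Y -> Z) (y z : Y) :
  continuous phi -> (forall x, A x -> B (phi x)) ->
  path_in R A y z -> path_in R B (phi y) (phi z).
Proof.
move=> cphi phiAB [p [cp Ap p0 p1]]; exists (phi \o p); split.
- by apply: within_continuous_comp cp => x _; exact: cphi.
- by move=> t /Ap /phiAB.
- by rewrite /= p0.
- by rewrite /= p1.
Qed.

Lemma ptws_continuous (Y : topologicalType) (I : Type) (T : topologicalType)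
    (f : Y -> {ptws I -> T}) :
  (forall i, continuous (fun y => f y i)) -> continuous f.
Proof.
move=> cf y; apply/cvg_sup => i U [_ /= [[W oW <-]]] /= Wfy /filterS; apply.
by apply: (cf i); exact: open_nbhs_nbhs.
Qed.

Lemma compact_open_comp_continuous (U V W : topologicalType) (phi : U -> V) :
  continuous phi ->
  continuous (fun g : {compact-open, V -> W} => g \o phi : {compact-open, U -> W}).
Proof.
move=> cphi g; apply/compact_open_cvgP => [|K O cK oO gKO].
  by apply: fmap_filter; exact: nbhs_filter.
have cphiK : compact (phi @` K).
  by apply: continuous_compact => //; exact: continuous_subspaceT.
have : nbhs g [set h : {compact-open, V -> W} | h @` (phi @` K) `<=` O].
  apply: open_nbhs_nbhs; split; first exact: compact_open_open.
  by move=> _ [_ [x Kx <-] <-]; apply: gKO; exists x.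
apply: filterS => h hO _ [x Kx <-]; apply: hO; exists (phi x) => //; exists x.
Qed.

Section ExtendByBasepoint.
Variables (T : topologicalType) (x0 : T) (I J : finType) (iota : I -> J).

Definition extend (t : I -> T) : J -> T :=
  fun j => if [pick i | iota i == j] is Some i then t i else x0.

Lemma extend_continuous : continuous (extend : {ptws I -> T} -> {ptws J -> T}).
Proof.
apply: ptws_continuous => j; rewrite /extend.
case: pickP => [i _|_]; last exact: cst_continuous.
exact: (@proj_continuous _ (fun=> T) i).
Qed.

Lemma extendE (t : I -> T) i : injective iota -> extend t (iota i) = t i.
Proof.
move=> inj_iota; rewrite /extend.
by case: pickP => [i' /eqP/inj_iota -> // | /(_ i)]; rewrite eqxx.
Qed.

Lemma eq_extend_comp (I' : finType) (iota' : I' -> J) (t u : I -> T) :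
  (forall i, iota i \in codom iota' -> t i = u i) ->
  extend t \o iota' = extend u \o iota'.
Proof.
move=> tu; apply: funext => i' /=; rewrite /extend.
by case: pickP => // i /eqP iota_i; apply: tu; rewrite iota_i codom_f.
Qed.

End ExtendByBasepoint.

Lemma base_in_circle : ((1, 0) : Rdefinitions.R * Rdefinitions.R) \in circle_set.
Proof. by rewrite inE /circle_set /= expr1n expr0n addr0. Qed.

Definition base : S1 :=
  exist _ ((1, 0) : Rdefinitions.R * Rdefinitions.R) base_in_circle.

Lemma std_proj_continuous k n (iota : 'I_k -> 'I_n) : continuous (std_proj iota).
Proof.
by apply: ptws_continuous => i; exact: (@proj_continuous _ (fun=> S1) (iota i)).
Qed.

Section LoopSpaces.
Variable X : topologicalType.

Lemma LnX_comp a b (phi : torus a -> torus b) (g : mapsp b X) :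
  continuous phi -> LnX g -> LnX (g \o phi : mapsp a X).
Proof. by move=> cphi cg t; apply: continuous_comp; [exact: cphi | exact: cg]. Qed.

Lemma same_pi0_refl n (f : mapsp n X) : LnX f -> same_pi0 f f.
Proof. exact: path_in_refl. Qed.

Lemma same_pi0_sym n (f g : mapsp n X) : same_pi0 f g -> same_pi0 g f.
Proof. exact: path_in_sym. Qed.

Lemma same_pi0_trans n (f g h : mapsp n X) :
  same_pi0 f g -> same_pi0 g h -> same_pi0 f h.
Proof. exact: path_in_trans. Qed.

Lemma same_pi0_comp a b (phi : torus a -> torus b) (u v : mapsp b X) :
  continuous phi -> same_pi0 u v -> same_pi0 (u \o phi : mapsp a X) (v \o phi).
Proof.
move=> cphi; apply: (@path_in_comp _ _ _ (@LnX b X) (@LnX a X)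
  (fun g : mapsp b X => g \o phi : mapsp a X)).
  exact: compact_open_comp_continuous.
by move=> g; exact: LnX_comp.
Qed.

Lemma same_pi0_induced_inj k n (iota : 'I_k -> 'I_n) (u v : mapsp k X) :
  injective iota -> same_pi0 (induced_map iota u) (induced_map iota v) ->
  same_pi0 u v.
Proof.
move=> inj_iota /(same_pi0_comp (extend_continuous (x0 := base) (iota := iota))).
have induced_extend (w : mapsp k X) : induced_map iota w \o extend base iota = w.
  by apply: funext => t; congr w; apply: funext => i; exact: extendE.
by rewrite !induced_extend.
Qed.

End LoopSpaces.

Section OrderInjections.
Variables (k n : nat) (iota : 'I_k -> 'I_n).

Lemma order_inj_inj : order_inj iota -> injective iota.
Proof.
by move=> oi i j eij; case: (ltngtP i j) => [/oi|/oi|/val_inj //]; rewrite eij ltnn.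
Qed.

Lemma order_inj_comp m (kappa : 'I_m -> 'I_k) :
  order_inj iota -> order_inj kappa -> order_inj (iota \o kappa).
Proof. by move=> oi ok i j /ok /oi. Qed.

Lemma order_inj_sorted : order_inj iota -> sorted (relpre val ltn) (codom iota).
Proof.
move=> oi; have enum_sorted : sorted (relpre val ltn) (enum 'I_k).
  by rewrite -sorted_map val_enum_ord iota_ltn_sorted.
exact: homo_sorted enum_sorted.
Qed.

End OrderInjections.

Lemma order_inj_codom_eq k k' n (iota : 'I_k -> 'I_n) (iota' : 'I_k' -> 'I_n) :
  order_inj iota -> order_inj iota' -> codom iota =i codom iota' ->
  exists e : k = k', forall i, iota' (cast_ord e i) = iota i.
Proof.
move=> oi oi' eq_codom.
have eq_seq : codom iota = codom iota'.
  apply: (@irr_sorted_eq _ (relpre val ltn)) eq_codom.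
  - by move=> ? ? ?; exact: ltn_trans.
  - by move=> ?; exact: ltnn.
  - exact: order_inj_sorted.
  - exact: order_inj_sorted.
have e : k = k'.
  by rewrite -[k]card_ord -[k']card_ord -(size_codom iota) -(size_codom iota') eq_seq.
exists e; subst k' => i; rewrite cast_ord_id.
by move/eq_in_map: eq_seq => /(_ i (mem_enum _ i)).
Qed.

Lemma lift_order_inj k (i0 : 'I_k) : order_inj (lift i0).
Proof. by move=> i j; rewrite /= !ltnNge leq_bump2. Qed.

Lemma new_codom_sub (X : topologicalType) k k' n (iota : 'I_k -> 'I_n)
    (iota' : 'I_k' -> 'I_n) (g : mapsp k X) (g' : mapsp k' X) :
  new_class g -> injective iota -> LnX g' ->
  same_pi0 (induced_map iota g) (induced_map iota' g') ->
  {subset codom iota <= codom iota'}.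
Proof.
move=> ng inj_iota Lg' sgg' _ /codomP[i0 ->]; apply/negPn/negP => miss; apply: ng.
pose phi : torus k.-1 -> torus k' :=
  std_proj iota' \o extend base iota \o extend base (lift i0).
(* iota i0 is not hit by iota', so the coordinate i0 of t is never read. *)
have factor : std_proj iota' \o extend base iota = phi \o std_proj (lift i0).
  apply: funext => t; apply: (eq_extend_comp base) => i iota_i.
  have [j ->|i_i0] := unliftP i0 i; last by move: miss; rewrite -i_i0 iota_i.
  by rewrite extendE //; exact: lift_inj.
exists k.-1, (lift i0), (g' \o phi : mapsp k.-1 X); split.
- by rewrite ltn_predL (leq_ltn_trans (leq0n i0) (ltn_ord i0)).
- exact: lift_order_inj.
- apply: LnX_comp Lg' => t.
  apply: (@continuous_comp (torus k.-1) (torus k)); first exact: extend_continuous.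
  apply: (@continuous_comp (torus k) (torus n)); first exact: extend_continuous.
  exact: std_proj_continuous.
- have -> : induced_map (lift i0) (g' \o phi) =
            induced_map iota' g' \o extend base iota.
    by rewrite -[RHS]/(g' \o (std_proj iota' \o extend base iota)) factor.
  have -> : g = induced_map iota g \o extend base iota.
    by apply: funext => t; congr g; apply: funext => i; rewrite /std_proj extendE.
  by apply: same_pi0_comp; [exact: extend_continuous | exact: same_pi0_sym].
Qed.

Lemma exists_new_preimage (X : topologicalType) n (f : mapsp n X) : LnX f ->
  exists k (iota : 'I_k -> 'I_n) (g : mapsp k X),
    [/\ order_inj iota, LnX g, new_class g & same_pi0 (induced_map iota g) f].
Proof.
elim/ltn_ind: n f => n IH f Lf.
have [[m [iota [h [lt_mn oi Lh sh]]]]|new_f] := pselect (old_class f); last first.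
  by exists n, id, f; split => //; exact: same_pi0_refl.
have [k [kappa [g [ok Lg ng sg]]]] := IH m lt_mn h Lh.
exists k, (iota \o kappa), g; split => //; first exact: order_inj_comp.
apply: same_pi0_trans sh.
by have := same_pi0_comp (std_proj_continuous (iota := iota)) sg.
Qed.

Unset Implicit Arguments.
Theorem proposition2p5 (X : topologicalType) (n : nat) (f : mapsp n X) :
  @LnX n X f ->
  exists (k : nat) (iota : 'I_k -> 'I_n) (g : mapsp k X),
    [/\ order_inj iota, @LnX k X g, new_class g,
        same_pi0 (induced_map iota g) f &
        forall (k' : nat) (iota' : 'I_k' -> 'I_n) (g' : mapsp k' X),
          order_inj iota' -> @LnX k' X g' -> new_class g' ->
          same_pi0 (induced_map iota' g') f ->
          exists e : k = k',
            (forall i : 'I_k, iota' (cast_ord e i) = iota i) /\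
            same_pi0 g (cast_map e g')].
Proof.
move=> Lf; have [k [iota [g [oi Lg ng sg]]]] := exists_new_preimage Lf.
exists k, iota, g; split => // k' iota' g' oi' Lg' ng' sg'.
have sgg' := same_pi0_trans sg (same_pi0_sym sg').
have eq_codom : codom iota =i codom iota'.
  move=> x; apply/idP/idP.
    exact: (new_codom_sub ng (order_inj_inj oi) Lg' sgg').
  exact: (new_codom_sub ng' (order_inj_inj oi') Lg (same_pi0_sym sgg')).
have [e eq_iota] := order_inj_codom_eq oi oi' eq_codom.
exists e; split => //; subst k'.
have eq_iota' : iota' = iota.
  by apply: funext => i; rewrite -(eq_iota i) cast_ord_id.
have -> : cast_map (erefl k) g' = g'.
  by apply: funext => t; congr g'; apply: funext => i; rewrite cast_ord_id.
by rewrite eq_iota' in sgg'; exact: same_pi0_induced_inj (order_inj_inj oi) sgg'.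
Qed.
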